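(* Fix integers $N\ge 1$, $t\ge 1$, $m\ge 1$. Let $A\in\{0,1\}^{N\times N}$ be an observed adjacency matrix and $X$ an $N\times d$ node feature matrix. Let $p(z)$ be a prior probability density on $\mathbb{R}^{t}$, and let $z\mapsto \tilde A_z\in[0,1]^{N\times N}$ be a deterministic decoder (with parameters $\theta$) mapping a latent graph embedding $z\in\mathbb{R}^t$ to a probabilistic adjacency matrix. Define $$p^0_\theta(A\mid \tilde A_z)=P(A\mid\tilde A_z)=\prod_{i=1}^N\prod_{j=1}^N (\tilde A_z)_{i,j}^{A_{i,j}}\bigl(1-(\tilde A_z)_{i,j}\bigr)^{1-A_{i,j}}.$$ For $u=1,\dots,m$ let $\phi_u$ be a descriptor function mapping (soft) $N\times N$ adjacency matrices to $\mathbb{R}^{l_u}$ with $l_u\ge 1$, let $F_u=\phi_u(A)\in\mathbb{R}^{l_u}$ and write $|F_u|=l_u$, and let $\sigma_u>0$. Let $\gamma\ge 0$. Define the micro-macro loss $$\mathcal{L}_\theta(A)=\mathcal{L}^0_\theta(A)+\gamma\,\mathcal{L}^1_{\theta,\sigma}(F_1,\dots,F_m),$$ where $$\mathcal{L}^0_\theta(A)=-\ln\int P(A\mid\tilde A_z)\,p(z)\,dz,\qquad \mathcal{L}^1_{\theta,\sigma}(F_1,\dots,F_m)=-\sum_{u=1}^m\frac{1}{|F_u|}\ln\int \mathcal{N}\bigl(F_u\mid \phi_u(\tilde A_z),\sigma_u^2 I\bigr)\,p(z)\,dz,$$ with $\mathcal{N}(\cdot\mid\mu,\sigma^2I)$ the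 Gaussian density with mean $\mu$ and covariance $\sigma^2 I$. Then for any approximate posterior density $q_\phi(z\mid A,X)=q(z\mid A,X,F_1,\dots,F_m)$ on $\mathbb{R}^t$ (with parameters $\phi$), $$\mathcal{L}_\theta(A)\le \mathbb{E}_{z\sim q_\phi(z\mid A,X)}\Bigl[-\ln p^0_\theta(A\mid\tilde A_z)-\gamma\sum_{u=1}^m\frac{1}{|F_u|}\ln\mathcal{N}\bigl(F_u\mid\phi_u(\tilde A_z),\sigma_u^2 I\bigr)\Bigr]+(1+\gamma m)\,\mathrm{KL}\bigl(q_\phi(z\mid A,X)\,\|\,p(z)\bigr).$$
   Context: This is a variational (ELBO-type) bound for a joint generative model of a graph: the adjacency matrix is generated edge-independently from a probabilistic adjacency matrix $\tilde A_z$ decoded from a latent graph embedding $z\sim p(z)$, and each graph statistic $F_u$ is modeled conditionally on $z$ as Gaussian with mean $\phi_u(\tilde A_z)$ and diagonal covariance $\sigma_u^2 I$. $\mathrm{KL}$ denotes Kullback–Leibler divergence. The hyperparameter $\gamma$ weights the graph-statistic (macro) loss relative to the edge (micro) loss. *)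

From HB Require Import structures.
From mathcomp Require Import all_boot all_order all_algebra.
From mathcomp Require Import all_classical all_reals all_analysis.
Set Implicit Arguments. Unset Strict Implicit. Unset Printing Implicit Defensive.
Import Order.TTheory GRing.Theory Num.Theory.
Local Open Scope ring_scope.

Section MicroMacro.
Variable R : realType.

Definition adj_real (N : nat) (A : 'M[bool]_N) : 'M[R]_N :=
  map_mx (fun b : bool => (b : nat)%:R) A.

Definition edge_lik (N : nat) (A : 'M[bool]_N) (At : 'M[R]_N) : R :=
  \prod_(i < N) \prod_(j < N)
     (At i j ^+ (A i j : nat) * (1 - At i j) ^+ (1 - (A i j : nat))%N).

Definition gauss_density (l : nat) (F mu : 'rV[R]_l) (s : R) : R :=
  (Num.sqrt (2 * pi * s ^+ 2)) ^- l *
  expR (- (\sum_(k < l) (F 0 k - mu 0 k) ^+ 2) / (2 * s ^+ 2)).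

Local Open Scope ereal_scope.

Definition kl_integrand (T : Type) (q p : T -> R) (z : T) : \bar R :=
  if q z == 0%R then 0
  else if p z == 0%R then +oo
  else ((q z) * ln (q z / p z))%:E.

Definition KL d (T : measurableType d) (mu : {measure set T -> \bar R})
  (q p : T -> R) : \bar R :=
  \int[mu]_z kl_integrand q p z.

End MicroMacro.

Arguments adj_real {R N}.
Arguments edge_lik {R N}.
Arguments gauss_density {R l}.
Arguments kl_integrand {R T}.
Arguments KL {R d T}.

From HB Require Import structures.
From mathcomp Require Import all_boot all_order all_algebra.
From mathcomp Require Import all_classical all_reals all_analysis.
From mathcomp Require Import measurable_realfun.
From mathcomp Require Import ring lra.
Set Implicit Arguments. Unset Strict Implicit. Unset Printing Implicit Defensive.
Import Order.TTheory GRing.Theory Num.Theory.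
Local Open Scope ring_scope.
Local Open Scope classical_set_scope.

(* For every bounded likelihood term [f] (the edge likelihood, or the Gaussian
   density of one graph statistic) the evidence lower bound
     - ln \int f p <= E_q[- ln f] + KL(q || p)
   holds.  It is obtained by integrating the pointwise inequality
     q (1 - ln b) - f p / b <= - q ln f + q ln (q / p),        (b > 0)
   an instance of ln y <= y - 1, and then choosing b = \int f p.  Adding the
   bound for the edge term to the bounds for the statistics, weighted by
   gamma / |F_u| <= gamma, and using KL(q || p) >= 0 gives the coefficient
   1 + gamma m in front of the KL term. *)

Section lower_integrable.
Context d (T : measurableType d) (R : realType) (mu : {measure set T -> \bar R}).
Local Open Scope ereal_scope.

(* Cross-entropy terms such as [q * - ln f] may take the value [+oo], so they
   are not integrable; but they are bounded below by an integrable real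
   function, and for such functions the integral is never [-oo] and is still
   additive and monotone. *)
Definition lower_integrable (f : T -> \bar R) :=
  measurable_fun setT f /\
  exists2 g : T -> R, mu.-integrable setT (EFin \o g) & forall x, (g x)%:E <= f x.

Lemma lower_integrable_nonneg_bound f : lower_integrable f ->
  exists g : T -> R, [/\ mu.-integrable setT (EFin \o g),
    forall x, (0 <= g x)%R & forall x, 0 <= f x + (g x)%:E].
Proof.
case=> _ [g ig gf]; exists (fun x => `|g x|)%R; split=> // [|x].
  by apply: eq_integrable (integrable_abse ig) => // x _.
rewrite -leeBlDr// sub0e; apply: le_trans (gf x).
by rewrite lee_fin lerNl -normrN ler_norm.
Qed.

Lemma integral_shift f g : measurable_fun setT f ->
  mu.-integrable setT (EFin \o g) -> (forall x, 0 <= g x)%R ->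
  (forall x, 0 <= f x + (g x)%:E) ->
  \int[mu]_x f x = \int[mu]_x (f x + (g x)%:E) - \int[mu]_x (g x)%:E.
Proof.
move=> mf ig g0 fg0.
have fneg_le x : f^\- x <= (g x)%:E.
  by rewrite funenegE ge_max lee_fin g0 andbT leeNl -sub0e leeBlDr.
have ifneg : mu.-integrable setT f^\-.
  apply: le_integrable ig => //; first exact: measurable_funeneg.
  by move=> x _; rewrite gee0_abs//= ger0_norm ?lee_fin.
have -> : (fun x => f x + (g x)%:E) =
    (fun x => f^\+ x + ((EFin \o g) \- f^\-) x).
  by apply/funext => x /=; rewrite [in LHS](funeposneg f) addeAC addeA.
rewrite ge0_integralD//; last 3 first.
- exact: measurable_funepos.
- by move=> x _; rewrite /= subre_ge0 ?fneg_le.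
- by apply: emeasurable_funD => //; [exact: measurable_int ig|
    apply: measurableT_comp => //; exact: measurable_funeneg].
rewrite integralB// integralE.
move: (integrable_fin_num measurableT ig) (integrable_fin_num measurableT ifneg).
move=> /fineK <- /fineK <-.
by case: (\int[mu]_x f^\+ x) => [r| |] //=; congr EFin; ring.
Qed.

Lemma lower_integral_neqNy f : lower_integrable f -> \int[mu]_x f x != -oo.
Proof.
move=> lf; have [g [ig g0 fg0]] := lower_integrable_nonneg_bound lf.
rewrite (integral_shift lf.1 ig g0 fg0).
have : 0 <= \int[mu]_x (f x + (g x)%:E) by apply: integral_ge0.
move: (integrable_fin_num measurableT ig) => /fineK <-.
by case: (\int[mu]_x (f x + (g x)%:E)).
Qed.

Lemma le_lower_integral f1 f2 : lower_integrable f1 ->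
  measurable_fun setT f2 -> (forall x, f1 x <= f2 x) ->
  \int[mu]_x f1 x <= \int[mu]_x f2 x.
Proof.
move=> lf1 mf2 f12; have [g [ig g0 fg0]] := lower_integrable_nonneg_bound lf1.
have mg := measurable_int _ ig.
have f2g0 x : 0 <= f2 x + (g x)%:E by apply: le_trans (fg0 x) _; exact: leeD2r.
rewrite (integral_shift lf1.1 ig g0 fg0) (integral_shift mf2 ig g0 f2g0).
apply: leeD2r; apply: ge0_le_integral => //; last by move=> x _; exact: leeD2r.
- exact: emeasurable_funD lf1.1 mg.
- exact: emeasurable_funD mf2 mg.
Qed.

Lemma lower_integrableD f1 f2 : lower_integrable f1 -> lower_integrable f2 ->
  lower_integrable (fun x => f1 x + f2 x).
Proof.
move=> [mf1 [g1 ig1 gf1]] [mf2 [g2 ig2 gf2]].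
split; first exact: emeasurable_funD.
exists (g1 \+ g2)%R => [|x]; first exact: (integrableD measurableT ig1 ig2).
exact: (leeD (gf1 x) (gf2 x)).
Qed.

Lemma lower_integralD f1 f2 : lower_integrable f1 -> lower_integrable f2 ->
  \int[mu]_x (f1 x + f2 x) = \int[mu]_x f1 x + \int[mu]_x f2 x.
Proof.
move=> lf1 lf2.
have [g1 [ig1 g10 fg10]] := lower_integrable_nonneg_bound lf1.
have [g2 [ig2 g20 fg20]] := lower_integrable_nonneg_bound lf2.
have ig : mu.-integrable setT (EFin \o (g1 \+ g2)%R) :=
  integrableD measurableT ig1 ig2.
have g0 x : (0 <= g1 x + g2 x)%R by rewrite addr_ge0.
have fg0 x : 0 <= f1 x + f2 x + (g1 x + g2 x)%:E.
  by rewrite EFinD addeACA adde_ge0.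
have split_shift : \int[mu]_x (f1 x + f2 x + (g1 x + g2 x)%:E) =
    \int[mu]_x (f1 x + (g1 x)%:E) + \int[mu]_x (f2 x + (g2 x)%:E).
  rewrite -ge0_integralD//; last 2 first.
  - exact: emeasurable_funD lf1.1 (measurable_int _ ig1).
  - exact: emeasurable_funD lf2.1 (measurable_int _ ig2).
  by apply: eq_integral => x _; rewrite EFinD addeACA.
rewrite (integral_shift (emeasurable_funD lf1.1 lf2.1) ig g0 fg0) split_shift.
rewrite (integral_shift lf1.1 ig1 g10 fg10) (integral_shift lf2.1 ig2 g20 fg20).
rewrite (integralD_EFin measurableT ig1 ig2) oppeD; first exact: addeACA.
exact: fin_num_adde_defl (integrable_fin_num measurableT ig2).
Qed.

Lemma lower_integrableZl (k : R) f : (0 <= k)%R -> lower_integrable f ->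
  lower_integrable (fun x => k%:E * f x).
Proof.
move=> k0 [mf [g ig gf]]; split; first exact: measurable_funeM.
exists (fun x => k * g x)%R => [|x]; first exact: (integrableZl measurableT k ig).
by rewrite EFinM lee_wpmul2l.
Qed.

Lemma lower_integralZl (k : R) f : (0 <= k)%R -> lower_integrable f ->
  \int[mu]_x (k%:E * f x) = k%:E * \int[mu]_x f x.
Proof.
move=> k0 lf; have [g [ig g0 fg0]] := lower_integrable_nonneg_bound lf.
have ikg : mu.-integrable setT (EFin \o (fun x => k * g x)%R) :=
  integrableZl measurableT k ig.
have kD x : k%:E * f x + (k * g x)%:E = k%:E * (f x + (g x)%:E).
  by rewrite muleDr// fin_num_adde_defl.
have kfg0 x : 0 <= k%:E * f x + (k * g x)%:E by rewrite kD mule_ge0.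
rewrite (integral_shift lf.1 ig g0 fg0).
have kg0 x : (0 <= k * g x)%R by rewrite mulr_ge0.
rewrite (integral_shift (measurable_funeM _ lf.1) ikg kg0 kfg0).
under eq_integral do rewrite kD.
rewrite ge0_integralZl_EFin//; last first.
  exact: emeasurable_funD lf.1 (measurable_int _ ig).
have -> : \int[mu]_x (k * g x)%:E = k%:E * \int[mu]_x (g x)%:E :=
  integralZl measurableT ig k.
rewrite [RHS]muleBr//; apply: fin_num_adde_defl.
by rewrite fin_numN; exact: (integrable_fin_num measurableT ig).
Qed.

Lemma lower_integrable_sum (I : Type) (s : seq I) (f : I -> T -> \bar R) :
  (forall i, lower_integrable (f i)) ->
  lower_integrable (fun x => \sum_(i <- s) f i x).
Proof.
move=> lf; elim: s => [|i s IH].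
  rewrite (_ : (fun x => _) = cst 0); last by apply/funext => x; rewrite big_nil.
  by split=> //; exists (cst 0%R) => //; exact: integrable0.
rewrite (_ : (fun x => _) = fun x => f i x + \sum_(j <- s) f j x).
  exact: lower_integrableD.
by apply/funext => x; rewrite big_cons.
Qed.

Lemma lower_integral_sum (I : Type) (s : seq I) (f : I -> T -> \bar R) :
  (forall i, lower_integrable (f i)) ->
  \int[mu]_x (\sum_(i <- s) f i x) = \sum_(i <- s) \int[mu]_x f i x.
Proof.
move=> lf; elim: s => [|i s IH].
  by rewrite big_nil; apply: integral0_eq => x _; rewrite big_nil.
under eq_integral do rewrite big_cons.
by rewrite lower_integralD ?IH ?big_cons//; exact: lower_integrable_sum.
Qed.

End lower_integrable.

Section pointwise.
Context (R : realType).
Local Open Scope ereal_scope.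

Lemma elbo_integrand_real (q p f b : R) : (0 < q)%R -> (0 < p)%R -> (0 < f)%R ->
  (0 < b)%R -> (q * (1 - ln b) - f * p / b <= q * - ln f + q * ln (q / p))%R.
Proof.
move=> q0 p0 f0 b0; set x := (f * p / (b * q))%R.
have x0 : (0 < x)%R by rewrite divr_gt0 ?mulr_gt0.
have ln_le : (ln x <= x - 1)%R.
  by have := @le_ln1Dx R (x - 1); rewrite subrKC; apply; lra.
have lnx : ln x = (ln f + ln p - ln b - ln q)%R.
  by rewrite ln_div ?posrE ?mulr_gt0// !lnM ?posrE// opprD addrA.
have qx : (q * x = f * p / b)%R by rewrite /x; field; rewrite !gt_eqF.
have := ler_wpM2l (ltW q0) ln_le.
rewrite mulrBr qx mulr1 lnx ln_div ?posrE//.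
lra.
Qed.

Lemma elbo_integrand_ge (T : Type) (q p f : T -> R) (b : R) (z : T) :
  (0 <= q z)%R -> (0 <= p z)%R -> (0 <= f z)%R -> (0 < b)%R ->
  (q z * (1 - ln b) - f z * p z / b)%:E <=
    (q z)%:E * - lne (f z)%:E + kl_integrand q p z.
Proof.
move=> q0 p0 f0 b0; rewrite /kl_integrand.
have [->|qn0] := eqVneq (q z) 0%R.
  rewrite mul0e add0e mul0r sub0r lee_fin oppr_le0.
  by apply: divr_ge0; [exact: mulr_ge0 | exact: ltW].
have qp : (0 < q z)%R by rewrite lt_def qn0.
have [f_le0|fp] := leP (f z) 0%R.
  by rewrite le0_lneNy//= gt0_muley ?lte_fin// addye ?leey//; case: ifP.
rewrite lne_EFin// -EFinN -EFinM.
have [->|pn0] := eqVneq (p z) 0%R; first by rewrite addey ?leey.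
by rewrite -EFinD lee_fin elbo_integrand_real// lt_def pn0.
Qed.

Lemma kl_integrand_ge (T : Type) (q p : T -> R) (z : T) :
  (0 <= q z)%R -> (0 <= p z)%R -> (q z - p z)%:E <= kl_integrand q p z.
Proof.
move=> q0 p0.
have := @elbo_integrand_ge T q p (fun=> 1%R) 1%R z q0 p0 ler01 ltr01.
by rewrite ln1 subr0 mulr1 mul1r divr1 lne1 oppe0 mule0 add0e.
Qed.

(* [- ln a] is the supremum over [b > 0] of [1 - ln b - a / b], attained at
   [b = a]; for [a = 0] the supremum is [+oo = - lne 0]. *)
Lemma oppe_lne_le (a : R) (X : \bar R) : (0 <= a)%R ->
  (forall b, (0 < b)%R -> ((1 - ln b) - a / b)%:E <= X) -> - lne a%:E <= X.
Proof.
move=> a0 aX; have [apos|a_le0] := ltP 0%R a.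
  rewrite lne_EFin// -EFinN; have := aX a apos.
  by rewrite divff ?gt_eqF// addrAC subrr add0r.
have a_eq0 : a = 0%R by apply/le_anti; rewrite a_le0 a0.
rewrite a_eq0 in aX *.
rewrite le0_lneNy//= (eq_infty (x:=X)) ?leey// => r.
have := aX (expR (1 - r)) (expR_gt0 _).
by rewrite expRK mul0r subr0 opprB addrC subrK.
Qed.

End pointwise.

Lemma measurable_lne_comp d (T : measurableType d) (R : realType) (f : T -> R) :
  measurable_fun setT f -> measurable_fun setT (fun z => lne (f z)%:E).
Proof.
move=> mf; apply: measurable_fun_ifT.
- by apply: measurable_fun_ler => //; exact: measurable_cst.
- exact: measurable_cst.
- by apply/measurable_EFinP; apply: measurableT_comp => //; exact: measurable_ln.
Qed.

Section elbo.
Context d (T : measurableType d) (R : realType) (mu : {measure set T -> \bar R}).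
Local Open Scope ereal_scope.

Lemma density_integrable (h : T -> R) : measurable_fun setT h ->
  (forall z, 0 <= h z)%R -> \int[mu]_z (h z)%:E = 1 ->
  mu.-integrable setT (EFin \o h).
Proof.
move=> mh h0 h1; apply/integrableP; split; first exact/measurable_EFinP.
by under eq_integral => z _ do rewrite /= ger0_norm//; rewrite h1 ltry.
Qed.

Variables p q : T -> R.
Hypotheses (mp : measurable_fun setT p) (p0 : forall z, (0 <= p z)%R)
  (p1 : \int[mu]_z (p z)%:E = 1).
Hypotheses (mq : measurable_fun setT q) (q0 : forall z, (0 <= q z)%R)
  (q1 : \int[mu]_z (q z)%:E = 1).

Let ip := density_integrable mp p0 p1.
Let iq := density_integrable mq q0 q1.

Lemma measurable_kl_integrand : measurable_fun setT (kl_integrand q p).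
Proof.
have -> : kl_integrand q p = fun z => if q z == 0%R then 0 else
    if p z == 0%R then +oo else (q z * (ln (q z) - ln (p z)))%:E.
  apply/funext => z; rewrite /kl_integrand.
  have [//|qn0] := eqVneq (q z) 0%R; have [//|pn0] := eqVneq (p z) 0%R.
  have qpos : (0 < q z)%R by rewrite lt_def qn0 q0.
  have ppos : (0 < p z)%R by rewrite lt_def pn0 p0.
  by rewrite ln_div ?posrE.
apply: measurable_fun_ifT.
- exact: measurable_fun_eqr mq (measurable_cst _).
- exact: measurable_cst.
apply: measurable_fun_ifT.
- exact: measurable_fun_eqr mp (measurable_cst _).
- exact: measurable_cst.
apply/measurable_EFinP; apply: measurable_funM => //.
by apply: measurable_funB; apply: measurableT_comp => //; exact: measurable_ln.
Qed.

Lemma lower_integrable_kl : lower_integrable mu (kl_integrand q p).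
Proof.
split; first exact: measurable_kl_integrand.
exists (fun z => q z - p z)%R => [|z]; last exact: kl_integrand_ge.
exact: (integrableB measurableT iq ip).
Qed.

Lemma lower_integrable_cross_entropy (f : T -> R) (M : R) :
  measurable_fun setT f -> (forall z, 0 <= f z <= M)%R ->
  lower_integrable mu (fun z => (q z)%:E * - lne (f z)%:E).
Proof.
move=> mf fM; split.
  apply: emeasurable_funM; first exact/measurable_EFinP.
  by apply: measurableT_comp => //; exact: measurable_lne_comp.
exists (fun z => - ln M * q z)%R => [|z].
  exact: (integrableZl measurableT _ iq).
have /andP[f0 fleM] := fM z.
have [f_le0|fpos] := leP (f z) 0%R.
  rewrite le0_lneNy//=; have [->|qn0] := eqVneq (q z) 0%R.
    by rewrite mulr0; apply: mule_ge0.
  by rewrite gt0_muley ?leey// lte_fin lt_def qn0 q0.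
rewrite lne_EFin// -EFinN -EFinM lee_fin mulNr mulrN mulrC lerN2.
by rewrite ler_wpM2l// ler_ln ?posrE// (lt_le_trans fpos).
Qed.

Lemma integrable_mul_density (f : T -> R) (M : R) : measurable_fun setT f ->
  (forall z, 0 <= f z <= M)%R ->
  mu.-integrable setT (EFin \o (fun z => f z * p z)%R).
Proof.
move=> mf fM.
apply: (le_integrable measurableT _ _ (integrableZl measurableT `|M| ip)).
  by apply/measurable_EFinP; exact: measurable_funM.
move=> z _; have /andP[f0 fleM] := fM z.
rewrite /= lee_fin !normrM normr_id ler_wpM2r// ger0_norm//.
exact: le_trans fleM (ler_norm M).
Qed.

Lemma elbo (f : T -> R) (M : R) : measurable_fun setT f ->
  (forall z, 0 <= f z <= M)%R ->
  - lne (\int[mu]_z (f z * p z)%:E) <=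
    \int[mu]_z ((q z)%:E * - lne (f z)%:E) + KL mu q p.
Proof.
move=> mf fM; have ifp := integrable_mul_density mf fM.
have a_fin : \int[mu]_z (f z * p z)%:E \is a fin_num.
  exact: (integrable_fin_num measurableT ifp).
have a0 : 0 <= \int[mu]_z (f z * p z)%:E.
  apply: integral_ge0 => z _; have /andP[f0 _] := fM z.
  by rewrite lee_fin mulr_ge0.
rewrite /KL -lower_integralD; last 2 first.
- exact: lower_integrable_cross_entropy mf fM.
- exact: lower_integrable_kl.
rewrite -(fineK a_fin); apply: oppe_lne_le; first by rewrite fine_ge0.
move=> b b0; set a := fine _.
pose h z := ((1 - ln b) * q z - b^-1 * (f z * p z))%R.
have ih : mu.-integrable setT (EFin \o h).
  exact: (integrableB measurableT (integrableZl measurableT (1 - ln b) iq)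
    (integrableZl measurableT b^-1 ifp)).
have -> : ((1 - ln b) - a / b)%:E = \int[mu]_z (h z)%:E.
  rewrite (integralB_EFin measurableT (integrableZl measurableT _ iq)
    (integrableZl measurableT _ ifp)).
  rewrite (integralZl measurableT iq) (integralZl measurableT ifp).
  by rewrite q1 mule1 -(fineK a_fin) -EFinM -EFinB mulrC.
apply: le_lower_integral.
- by split; [exact: measurable_int ih | exists h].
- apply: emeasurable_funD; last exact: measurable_kl_integrand.
  apply: emeasurable_funM; first exact/measurable_EFinP.
  by apply: measurableT_comp => //; exact: measurable_lne_comp.
- move=> z; have /andP[f0 _] := fM z; rewrite /h mulrC (mulrC b^-1)%R.
  exact: elbo_integrand_ge.
Qed.

Lemma KL_ge0 : 0 <= KL mu q p.
Proof.
have := @elbo (fun=> 1%R) 1%R (measurable_cst _).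
rewrite ler01 lexx => /(_ (fun=> isT)).
under eq_integral do rewrite mul1r.
under [X in _ <= X + _]eq_integral do rewrite lne1 oppe0 mule0.
by rewrite p1 lne1 oppe0 integral0 add0e.
Qed.

Lemma integral_cross_entropy_weighted (I : finType) (f0 : T -> R) (M0 : R)
    (g : I -> T -> R) (M c : I -> R) (gamma : R) :
  measurable_fun setT f0 -> (forall z, 0 <= f0 z <= M0)%R ->
  (forall i, measurable_fun setT (g i)) -> (forall i z, 0 < g i z <= M i)%R ->
  (forall i, 0 <= c i)%R -> (0 <= gamma)%R ->
  \int[mu]_z ((q z)%:E * (- lne (f0 z)%:E -
      gamma%:E * \sum_(i : I) (c i)%:E * lne (g i z)%:E)) =
  \int[mu]_z ((q z)%:E * - lne (f0 z)%:E) +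
    gamma%:E * \sum_(i : I) (c i)%:E * \int[mu]_z ((q z)%:E * - lne (g i z)%:E).
Proof.
move=> mf0 f0M mg gM c0 gamma0.
have gM' i z : (0 <= g i z <= M i)%R by have /andP[/ltW -> ->] := gM i z.
have lf0 := lower_integrable_cross_entropy mf0 f0M.
have lg i := lower_integrable_cross_entropy (mg i) (gM' i).
have lcg i := lower_integrableZl (c0 i) (lg i).
under eq_bigr do rewrite -(lower_integralZl (c0 _) (lg _)).
rewrite -(lower_integral_sum _ lcg).
rewrite -(lower_integralZl gamma0 (lower_integrable_sum _ lcg)).
have lsum := lower_integrableZl gamma0 (lower_integrable_sum (index_enum I) lcg).
rewrite -(lower_integralD lf0 lsum).
apply: eq_integral => z _.
have gz0 i : (0 < g i z)%R by have /andP[] := gM i z.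
set s := (\sum_(i : I) c i * ln (g i z))%R.
have -> : \sum_(i : I) (c i)%:E * lne (g i z)%:E = s%:E.
  by rewrite /s -sumEFin; apply: eq_bigr => i _; rewrite lne_EFin.
have -> : \sum_(i : I) (c i)%:E * ((q z)%:E * - lne (g i z)%:E) =
    (- (q z * s))%:E.
  rewrite /s mulr_sumr -sumrN -sumEFin; apply: eq_bigr => i _.
  by rewrite lne_EFin// -EFinN -!EFinM; congr EFin; ring.
rewrite muleDr ?fin_num_adde_defl// -EFinN -!EFinM; congr (_ + _%:E); ring.
Qed.

End elbo.

Section model.
Context (R : realType).

Lemma edge_lik_ge0_le1 (N : nat) (A : 'M[bool]_N) (At : 'M[R]_N) :
  (forall i j, 0 <= At i j <= 1) -> 0 <= edge_lik A At <= 1.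
Proof.
move=> At01.
have factor01 i j : 0 <= At i j ^+ A i j * (1 - At i j) ^+ (1 - A i j)%N <= 1.
  have /andP[a0 a1] := At01 i j.
  have b0 : 0 <= 1 - At i j by rewrite subr_ge0.
  have b1 : 1 - At i j <= 1 by rewrite gerBl.
  by rewrite mulr_ge0 ?exprn_ge0//= mulr_ile1 ?exprn_ge0 ?exprn_ile1.
have row01 i :
    0 <= \prod_(j < N) (At i j ^+ A i j * (1 - At i j) ^+ (1 - A i j)%N) <= 1.
  by rewrite prodr_ge0 ?prodr_ile1// => j _; have /andP[] := factor01 i j.
by rewrite prodr_ge0 ?prodr_ile1// => i _; have /andP[] := row01 i.
Qed.

Lemma measurable_edge_lik d (T : measurableType d) (N : nat) (A : 'M[bool]_N)
    (At : T -> 'M[R]_N) :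
  (forall i j, measurable_fun setT (fun z => At z i j)) ->
  measurable_fun setT (fun z => edge_lik A (At z)).
Proof.
move=> mAt; apply: measurable_prod => i _; apply: measurable_prod => j _.
apply: measurable_funM; apply: measurable_funX => //.
by apply: measurable_funB => //; exact: measurable_cst.
Qed.

Lemma gauss_density_gt0_le (l : nat) (F mu : 'rV[R]_l) (s : R) : 0 < s ->
  0 < gauss_density F mu s <= (Num.sqrt (2 * pi * s ^+ 2)) ^- l.
Proof.
move=> s0; have c0 : 0 < (Num.sqrt (2 * pi * s ^+ 2)) ^- l.
  by rewrite invr_gt0 exprn_gt0// sqrtr_gt0 !mulr_gt0 ?pi_gt0 ?exprn_gt0.
rewrite mulr_gt0 ?expR_gt0//= ger_pMr// expR_le1 mulNr oppr_le0.
apply: divr_ge0; first by apply: sumr_ge0 => k _; exact: sqr_ge0.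
by rewrite mulr_ge0 ?sqr_ge0.
Qed.

Lemma measurable_gauss_density d (T : measurableType d) (l : nat) (F : 'rV[R]_l)
    (mu : T -> 'rV[R]_l) (s : R) :
  (forall k, measurable_fun setT (fun z => mu z 0 k)) ->
  measurable_fun setT (fun z => gauss_density F (mu z) s).
Proof.
move=> mmu; apply: measurable_funM; first exact: measurable_cst.
apply: measurableT_comp; first exact: measurable_expR.
apply: measurable_funM; last exact: measurable_cst.
apply: measurable_funN; apply: measurable_sum => k.
by apply: measurable_funX; apply: measurable_funB => //; exact: measurable_cst.
Qed.

End model.

Section weighted_sum.
Local Open Scope ereal_scope.

Lemma lee_weighted_sum_bounds (R : realType) (I : finType) (c : I -> R)
    (gamma : R) (L0 E0 K : \bar R) (L E : I -> \bar R) :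
  (0 <= gamma)%R -> (forall i, 0 <= c i <= 1)%R -> (0 <= K)%E ->
  (forall i, E i != -oo)%E -> (L0 <= E0 + K)%E -> (forall i, L i <= E i + K)%E ->
  (L0 + gamma%:E * \sum_(i : I) (c i)%:E * L i <=
    (E0 + gamma%:E * \sum_(i : I) (c i)%:E * E i) +
    (1 + gamma * #|I|%:R)%:E * K)%E.
Proof.
move=> gamma0 c01 K0 ENy hL0 hL.
have c0 i : (0 <= c i)%R by have /andP[] := c01 i.
have cE_Ny i : (c i)%:E * E i != -oo.
  move: (ENy i); case: (E i) => [r| |] // _.
  have [->|cn0] := eqVneq (c i) 0%R; first by rewrite mul0e.
  by rewrite gt0_muley// lte_fin lt_def cn0 c0.
have sumE_Ny : \sum_(i : I) (c i)%:E * E i != -oo.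
  by apply/eqP => /esum_eqNyP[i [_ _ /eqP]]; apply/negP.
have K_Ny : K != -oo by rewrite gt_eqF// (lt_le_trans _ K0) ?ltNy0.
have sum_c : (\sum_(i : I) c i <= #|I|%:R)%R.
  have -> : (#|I|%:R = \sum_(i : I) (1 : R))%R by rewrite sumr_const.
  by apply: ler_sum => i _; have /andP[] := c01 i.
have step1 : \sum_(i : I) (c i)%:E * L i <=
    \sum_(i : I) (c i)%:E * E i + (#|I|%:R)%:E * K.
  apply: (@le_trans _ _ (\sum_(i : I) (c i)%:E * (E i + K))).
    by apply: lee_sum => i _; apply: lee_wpmul2l; rewrite ?lee_fin ?c0 ?hL.
  rewrite (eq_bigr (fun i => (c i)%:E * E i + (c i)%:E * K)); last first.
    by move=> i _; rewrite muleDr// ltninfty_adde_def// inE ltNye.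
  rewrite big_split leeD2l// -ge0_sume_distrl; last first.
    by move=> i _; rewrite lee_fin.
  apply: lee_wpmul2r => //.
  have -> : \sum_(i : I) (c i)%:E = (\sum_(i : I) c i)%:E by rewrite -sumEFin.
  by rewrite lee_fin.
apply: le_trans (leeD hL0 (lee_wpmul2l _ step1)) _; first by rewrite lee_fin.
have mK_Ny : (#|I|%:R)%:E * K != -oo.
  by rewrite gt_eqF// (lt_le_trans ltNy0)// mule_ge0.
rewrite muleDr// ?ltninfty_adde_def ?inE ?ltNye//.
rewrite muleA -EFinM addeACA EFinD ge0_muleDl ?mul1e// lee_fin.
by rewrite mulr_ge0.
Qed.

End weighted_sum.

Theorem proposition1 (R : realType)
  (d : measure_display) (T : measurableType d) (mu : {measure set T -> \bar R})
  (N m : nat) (A : 'M[bool]_N)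
  (Atil : T -> 'M[R]_N)
  (l : 'I_m -> nat) (phi : forall u : 'I_m, 'M[R]_N -> 'rV[R]_(l u))
  (sigma : 'I_m -> R) (gamma : R) (p q : T -> R) :
  (1 <= N)%N -> (1 <= m)%N ->
  (forall u, (1 <= l u)%N) ->
  (forall u, 0 < sigma u) ->
  0 <= gamma ->
  (* decoder: measurable, with values in [0,1]^(N x N) *)
  (forall z i j, 0 <= Atil z i j <= 1) ->
  (forall i j, measurable_fun setT (fun z => Atil z i j)) ->
  (forall u k, measurable_fun setT (fun z => phi u (Atil z) 0 k)) ->
  (* prior density p and approximate posterior density q *)
  measurable_fun setT p -> (forall z, 0 <= p z) ->
  (\int[mu]_z (p z)%:E = 1)%E ->
  measurable_fun setT q -> (forall z, 0 <= q z) ->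
  (\int[mu]_z (q z)%:E = 1)%E ->
  let F := fun u : 'I_m => phi u (adj_real A) in
  let L0 := (- lne (\int[mu]_z (edge_lik A (Atil z) * p z)%:E))%E in
  let L1 := (\sum_(u < m) ((l u)%:R^-1)%:E *
               - lne (\int[mu]_z
                   (gauss_density (F u) (phi u (Atil z)) (sigma u) * p z)%:E))%E in
  (L0 + gamma%:E * L1 <=
     \int[mu]_z ((q z)%:E *
        (- lne (edge_lik A (Atil z))%:E
         - gamma%:E * \sum_(u < m) ((l u)%:R^-1)%:E *
             lne (gauss_density (F u) (phi u (Atil z)) (sigma u))%:E))
     + (1 + gamma * m%:R)%:E * KL mu q p)%E.
Proof.
move=> _ _ l_ge1 sigma_gt0 gamma_ge0 Atil01 mAtil mphi mp p0 p1 mq q0 q1.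
cbv zeta.
pose c (u : 'I_m) : R := (l u)%:R^-1.
pose g u z := gauss_density (phi u (adj_real A)) (phi u (Atil z)) (sigma u).
pose M (u : 'I_m) := (Num.sqrt (2 * pi * sigma u ^+ 2)) ^- l u.
have c0 u : 0 <= c u by rewrite invr_ge0.
have c01 u : 0 <= c u <= 1 by rewrite c0 invf_le1 ?ltr0n ?ler1n ?l_ge1.
have mg u : measurable_fun setT (g u) := measurable_gauss_density _ _ (mphi u).
have gM u z : 0 < g u z <= M u := gauss_density_gt0_le _ _ (sigma_gt0 u).
have gM' u z : 0 <= g u z <= M u by have /andP[/ltW -> ->] := gM u z.
have mf0 := measurable_edge_lik A mAtil.
have f01 z := edge_lik_ge0_le1 A (Atil01 z).
rewrite (integral_cross_entropy_weighted mq q0 q1 mf0 f01 mg gM c0 gamma_ge0).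
have E_Ny u :=
  lower_integral_neqNy (lower_integrable_cross_entropy mq q0 q1 (mg u) (gM' u)).
have elbo0 := elbo mp p0 p1 mq q0 q1 mf0 f01.
have elbo_u u := elbo mp p0 p1 mq q0 q1 (mg u) (gM' u).
have := lee_weighted_sum_bounds gamma_ge0 c01 (KL_ge0 mp p0 p1 mq q0 q1) E_Ny
  elbo0 elbo_u.
by rewrite card_ord.
Qed.
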